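(* Let $F$ be a field of characteristic zero and $A$ a $\#$-superalgebra over $F$. Let $n_1,n_2,n_3,n_4,m$ be positive integers, $\langle n\rangle=(n_1,n_2,n_3,n_4)$, $i_0\in\{1,2,3,4\}$ with $n_{i_0}\ge m^2$, and $Q=\{q_1,\dots,q_{m^2}\}\subseteq\{1,\dots,n_{i_0}\}$ with $|Q|=m^2$. Let $\rho=\rho_1\otimes\cdots\otimes\rho_4$ where $\rho_{i_0}\in FS_Q$ and $\rho_j\in FS_{n_j}$ for $j\ne i_0$, and let $f\in P_{\langle n\rangle}$ be such that $\rho f\not\equiv0$ in $A$. Let $V_{i_0}$ denote the variables of type $i_0$ (i.e. $y_{0,\cdot}$ if $i_0=1$, $z_{0,\cdot}$ if $i_0=2$, $y_{1,\cdot}$ if $i_0=3$, $z_{1,\cdot}$ if $i_0=4$), and $v_{k}$ the variable of type $i_0$ with second index $k$. Then there exist integers $t_1,t_2,t_3,t_4\ge0$, with $t=t_1+t_2+t_3+t_4$, $t_{i_0}\ge m^2$ and $m^2\le t\le 2m^2+1$, and a multilinear $\#$-supermonomial $w$ whose variables are: for each type $j\ne i_0$, the first $t_j$ variables of type $j$; and, for type $i_0$, a set $X_{t_{i_0}}$ of $t_{i_0}$ variables consisting of $v_{q_1},\dots,v_{q_{m^2}}$ together with $t_{i_0}-m^2$ further variables chosen among $\{v_1,\dots,v_{t_{i_0}}\}\setminus\{v_{q_1},\dots,v_{q_{m^2}}\}$; such that $$(Id_1\otimes\cdots\otimes\rho_{i_0}\otimes\cdots\otimes Id_4)\,w\not\equiv0\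 \text{ in } A,$$ where $\rho_{i_0}$ acts by permuting the indices in $Q$ of the variables $v_{q_1},\dots,v_{q_{m^2}}$ and all other factors act trivially.
   Context: All algebras are associative over $F$. A superalgebra is $A=A_0\oplus A_1$; a superinvolution is an $F$-linear $\#$ with $A_i^\#\subseteq A_i$, $(c^\#)^\#=c$, $(ab)^\#=(-1)^{\deg a\deg b}b^\#a^\#$; a graded involution is $F$-linear $\#$ with $A_i^\#\subseteq A_i$, $(c^\#)^\#=c$, $(ab)^\#=b^\#a^\#$; a $\#$-superalgebra carries one of these; $A_i^\pm=\{a\in A_i:a^\#=\pm a\}$. $\mathcal F$ is the free non-unital associative algebra on variables $y_{i,j}$ (symmetric) and $z_{i,j}$ (skew), $i\in\{0,1\}$, $j\ge1$; the variables $y_{0,j}$, $z_{0,j}$, $y_{1,j}$, $z_{1,j}$ are said to be of type 1, 2, 3, 4 respectively; variables with first index $i$ have $\mathbb Z_2$-degree $i$, and $\mathcal F$ carries the induced superinvolution/graded involution. A $\#$-supermonomial is a monomial of $\mathcal F$. $g\equiv0$ in $A$ means $g$ vanishes under all substitutions $y_{0,j}\mapsto A_0^+$, $z_{0,j}\mapsto A_0^-$, $y_{1,j}\mapsto A_1^+$, $z_{1,j}\mapsto A_1^-$. $P_{\langle n\rangle}$ is the span of monomials multilinear in $y_{0,1..n_1},z_{0,1..n_2},y_{1,1..n_3},z_{1,1..n_4}$; $FS_{n_1}\otimes\cdots\otimes FS_{n_4}$ acts on it by permuting second indices of each type separately, and $S_Q$ denotes the permutations of $\{1,\dots,n_{i_0}\}$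 fixing every point outside $Q$. *)

From HB Require Import structures.
From mathcomp Require Import all_boot all_order all_fingroup all_algebra.
Set Implicit Arguments. Unset Strict Implicit. Unset Printing Implicit Defensive.
Import GRing.Theory.
Local Open Scope ring_scope.

(* A is an F-vector space with an associative bilinear (possibly non-unital)
   multiplication [mul], a Z2-grading A = A0 (+) A1 given by two subspaces,
   and a map [sharp] which is a superinvolution (kind = true) or a graded
   involution (kind = false). *)

Definition hom (A : Type) (A0 A1 : A -> Prop) (i : bool) : A -> Prop :=
  if i then A1 else A0.

Definition is_subspace (F : fieldType) (A : lmodType F) (S : A -> Prop) :=
  S 0 /\ forall (k : F) (a b : A), S a -> S b -> S (k *: a + b).

Definition sharp_superalgebra (F : fieldType) (A : lmodType F)
    (mul : A -> A -> A) (A0 A1 : A -> Prop) (sharp : A -> A) (kind : bool) :=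
  [/\
      (forall a b c, mul a (mul b c) = mul (mul a b) c),
      (forall (k : F) a b c, mul (k *: a + b) c = k *: mul a c + mul b c),
      (forall (k : F) a b c, mul a (k *: b + c) = k *: mul a b + mul a c),
      [/\ is_subspace A0, is_subspace A1,
          (forall a, exists a0 a1, [/\ A0 a0, A1 a1 & a = a0 + a1]),
          (forall a, A0 a -> A1 a -> a = 0) &
          (forall (i j : bool) a b, hom A0 A1 i a -> hom A0 A1 j b ->
             hom A0 A1 (i (+) j) (mul a b))] &
      [/\ (forall (k : F) a b, sharp (k *: a + b) = k *: sharp a + sharp b),
          (forall (i : bool) a, hom A0 A1 i a -> hom A0 A1 i (sharp a)),
          (forall a, sharp (sharp a) = a) &
          (if kind then
             forall (i j : bool) a b, hom A0 A1 i a -> hom A0 A1 j b ->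
               sharp (mul a b) = (-1) ^+ (i && j) *: mul (sharp b) (sharp a)
           else forall a b, sharp (mul a b) = mul (sharp b) (sharp a))]].

(* A variable is a pair (j, k): j : 'I_4 is the type (j = 0,1,2,3 stands for
   types 1,2,3,4, i.e. y_0, z_0, y_1, z_1) and k : nat is the second index,
   0-based (k stands for the second index k+1). *)
Definition var := ('I_4 * nat)%type.

Definition var_deg (j : 'I_4) : bool := (2 <= j)%N.
Definition var_skew (j : 'I_4) : bool := odd j.

(* A monomial is a (nonempty) word in the variables; a polynomial of the free
   non-unital algebra is a formal F-linear combination of monomials. *)
Definition monom := seq var.
Definition fpoly (F : fieldType) := seq (F * monom).

(* admissible substitutions: y_0 -> A0^+, z_0 -> A0^-, y_1 -> A1^+, z_1 -> A1^- *)
Definition admissible (F : fieldType) (A : lmodType F) (A0 A1 : A -> Prop)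
    (sharp : A -> A) (phi : var -> A) :=
  forall v : var, hom A0 A1 (var_deg v.1) (phi v) /\
    sharp (phi v) = (if var_skew v.1 then -1 else 1) *: phi v.

Definition eval_mon (F : fieldType) (A : lmodType F) (mul : A -> A -> A)
    (phi : var -> A) (w : monom) : A :=
  if w is x :: w' then foldl (fun acc y => mul acc (phi y)) (phi x) w' else 0.

Definition eval_poly (F : fieldType) (A : lmodType F) (mul : A -> A -> A)
    (phi : var -> A) (p : fpoly F) : A :=
  \sum_(c <- p) c.1 *: eval_mon mul phi c.2.

Definition id_zero (F : fieldType) (A : lmodType F) (mul : A -> A -> A)
    (A0 A1 : A -> Prop) (sharp : A -> A) (g : fpoly F) :=
  forall phi, admissible A0 A1 sharp phi -> eval_poly mul phi g = 0.

Definition ml_vars (n : 'I_4 -> nat) : seq var :=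
  [seq (j, k) | j <- enum 'I_4, k <- iota 0 (n j)].

Definition in_P (F : fieldType) (n : 'I_4 -> nat) (f : fpoly F) :=
  all (fun c => perm_eq c.2 (ml_vars n)) f.

(* a permutation s of {1..N} acts on second indices (0-based: on 0..N-1) *)
Definition act_idx (N : nat) (s : 'S_N) (k : nat) : nat :=
  if insub k is Some i then val (s i) else k.

Definition act_var (j : 'I_4) (N : nat) (s : 'S_N) (v : var) : var :=
  if v.1 == j then (v.1, act_idx s v.2) else v.

Definition act_poly (F : fieldType) (j : 'I_4) (N : nat) (r : {ffun 'S_N -> F})
    (p : fpoly F) : fpoly F :=
  flatten [seq [seq (r s * c.1, map (act_var j s) c.2) | c <- p]
          | s <- enum {: 'S_N}].

Definition act_tensor (F : fieldType) (n : 'I_4 -> nat)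
    (rho : forall j : 'I_4, {ffun 'S_(n j) -> F}) (p : fpoly F) : fpoly F :=
  foldr (fun j q => act_poly j (rho j) q) p (enum 'I_4).

Definition in_FS_Q (F : fieldType) (N : nat) (Q : {set 'I_N})
    (r : {ffun 'S_N -> F}) :=
  forall s : 'S_N, r s != 0 -> forall k : 'I_N, k \notin Q -> s k = k.

From Pilot Require Import Defs.
From HB Require Import structures.
From mathcomp Require Import all_boot all_order all_fingroup all_algebra.
From mathcomp Require Import zify.
From Stdlib Require Import Classical.

(* Each rho_j only renames variables, so the actions of the rho_j with j <> i0
   can be absorbed into the substitution, and multilinearity isolates one
   monomial W of f with sum_s rho_i0(s) psi(s W) <> 0.  As rho_i0 lies in FS_Q,
   only the m^2 variables v_q (q in Q) move: every maximal run of the other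
   variables of W takes the same value in all terms, and there are at most
   m^2 + 1 such runs.  Splitting each run value into its homogeneous
   symmetric/skew components, one component per run keeps the sum nonzero;
   replacing each run by a fresh variable of the matching type yields the
   monomial w, in at most 2 m^2 + 1 variables. *)

Import GRing.Theory.
Local Open Scope ring_scope.
Set Implicit Arguments. Unset Strict Implicit. Unset Printing Implicit Defensive.
(* vector.v exports another [hom]. *)
Local Notation hom := Defs.hom.

Section Products.
Variables (F : fieldType) (A : lmodType F) (mul : A -> A -> A).

Definition prod_seq (xs : seq A) : A :=
  if xs is x :: xs' then foldl mul x xs' else 0.

Lemma eval_monE (g : var -> A) (w : monom) :
  eval_mon mul g w = prod_seq (map g w).
Proof. by case: w => //= x w; elim: w (g x) => //= y w IHw a; rewrite IHw. Qed.

Lemma eq_eval_poly (g1 g2 : var -> A) (p : fpoly F) :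
  g1 =1 g2 -> eval_poly mul g1 p = eval_poly mul g2 p.
Proof. by move=> eq_g; apply: eq_bigr => c _; rewrite !eval_monE (eq_map eq_g). Qed.

Lemma eval_act_poly (g : var -> A) (j : 'I_4) N (r : {ffun 'S_N -> F})
    (p : fpoly F) :
  eval_poly mul g (act_poly j r p) =
  \sum_(s <- enum {: 'S_N}) r s *: eval_poly mul (g \o act_var j s) p.
Proof.
rewrite /eval_poly /act_poly big_flatten big_map; apply: eq_bigr => s _.
rewrite big_map scaler_sumr; apply: eq_bigr => c _ /=.
by rewrite !eval_monE -map_comp scalerA.
Qed.

Hypothesis mulA : associative mul.
Hypothesis mulDl : left_distributive mul +%R.
Hypothesis mulDr : right_distributive mul +%R.

Lemma prod_seq_cons x xs : xs != [::] -> prod_seq (x :: xs) = mul x (prod_seq xs).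
Proof. by case: xs => //= y xs _; elim: xs y => //= z xs IHxs y; rewrite -IHxs mulA. Qed.

Lemma prod_seq_cons_mul x a xs :
  prod_seq (mul x a :: xs) = mul x (prod_seq (a :: xs)).
Proof.
by case: xs => [|y xs] //; rewrite (prod_seq_cons (mul x a)) // (prod_seq_cons a) // mulA.
Qed.

Lemma prod_seq_midD xs ys :
  {morph (fun a => prod_seq (xs ++ a :: ys)) : a b / a + b}.
Proof.
have foldlD zs : {morph foldl mul ^~ zs : a b / a + b}.
  by elim: zs => //= z zs IHzs a b; rewrite mulDl IHzs.
by move=> a b; case: xs => [|x xs] /=; rewrite ?foldl_cat /= ?mulDr foldlD.
Qed.

Lemma prod_seq_mid0 xs ys : prod_seq (xs ++ 0 :: ys) = 0.
Proof.
have := prod_seq_midD xs ys 0 0; rewrite addr0 => twice.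
by apply: (addIr (prod_seq (xs ++ 0 :: ys))); rewrite add0r -twice.
Qed.

Lemma prod_seq_mid_sum (I : Type) (l : seq I) (c : I -> A) xs ys :
  prod_seq (xs ++ \sum_(i <- l) c i :: ys) =
  \sum_(i <- l) prod_seq (xs ++ c i :: ys).
Proof. exact: (big_morph _ (prod_seq_midD xs ys) (prod_seq_mid0 xs ys)). Qed.

End Products.

Arguments prod_seq : simpl never.

Lemma nonzero_summand (V : nmodType) (I : eqType) (l : seq I) (G : I -> V) :
  \sum_(i <- l) G i != 0 -> exists2 i, i \in l & G i != 0.
Proof.
move=> nz; apply/hasP; apply: contraNT nz => /hasPn G0.
by rewrite big1_seq // => i /andP [_ /G0 /negPn /eqP].
Qed.

Section TypedComponents.
Variables (F : fieldType) (A : lmodType F) (A0 A1 : A -> Prop) (sharp : A -> A).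
Hypothesis two_neq0 : (2%:R : F) != 0.
Hypothesis A0_subspace : is_subspace A0.
Hypothesis A1_subspace : is_subspace A1.
Hypothesis A_graded : forall a, exists a0 a1, [/\ A0 a0, A1 a1 & a = a0 + a1].
Hypothesis sharp_linear :
  forall (k : F) a b, sharp (k *: a + b) = k *: sharp a + sharp b.
Hypothesis sharp_hom : forall (i : bool) a, hom A0 A1 i a -> hom A0 A1 i (sharp a).
Hypothesis sharpK : involutive sharp.

Definition sgn (j : 'I_4) : F := if var_skew j then -1 else 1.

Definition of_type (j : 'I_4) (a : A) :=
  hom A0 A1 (var_deg j) a /\ sharp a = sgn j *: a.

Lemma hom_subspace i : is_subspace (hom A0 A1 i).
Proof. by case: i. Qed.

Lemma homZ i k a : hom A0 A1 i a -> hom A0 A1 i (k *: a).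
Proof.
by case: (hom_subspace i) => h0 hlin ha; rewrite -[_ *: _]addr0; apply: hlin.
Qed.

Lemma homD i a b : hom A0 A1 i a -> hom A0 A1 i b -> hom A0 A1 i (a + b).
Proof. by case: (hom_subspace i) => _ hlin ha hb; rewrite -[a]scale1r; apply: hlin. Qed.

Lemma sharp0 : sharp 0 = 0.
Proof. by have := sharp_linear (-1) 0 0; rewrite scaler0 addr0 scaleN1r addNr. Qed.

Lemma sharpZ k a : sharp (k *: a) = k *: sharp a.
Proof. by have := sharp_linear k a 0; rewrite addr0 sharp0 addr0. Qed.

Lemma sharpD a b : sharp (a + b) = sharp a + sharp b.
Proof. by have := sharp_linear 1 a b; rewrite !scale1r. Qed.

Lemma of_type_half j x : hom A0 A1 (var_deg j) x ->
  of_type j (2%:R^-1 *: (x + sgn j *: sharp x)).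
Proof.
move=> x_hom; split; first by apply/homZ/homD => //; apply/homZ/sharp_hom.
have sgn2 : sgn j * sgn j = 1 by rewrite /sgn; case: (var_skew j); rewrite ?mulrNN mulr1.
rewrite sharpZ sharpD sharpZ sharpK scalerA mulrC -scalerA.
by congr (_ *: _); rewrite scalerDr scalerA sgn2 scale1r addrC.
Qed.

Lemma type_decomposition a :
  exists c : 'I_4 -> A, (forall j, of_type j (c j)) /\ a = \sum_(j < 4) c j.
Proof.
have [a0 [a1 [a0_hom a1_hom ->]]] := A_graded a.
pose part (b : bool) := if b then a1 else a0.
exists (fun j => 2%:R^-1 *: (part (var_deg j) + sgn j *: sharp (part (var_deg j)))).
split; first by move=> j; apply: of_type_half; rewrite /part; case: (var_deg j).
have halves (x y : A) : 2%:R^-1 *: (x + y) + 2%:R^-1 *: (x + -1 *: y) = x.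
  rewrite -scalerDr addrACA scaleN1r subrr addr0 -mulr2n -scaler_nat scalerA.
  by rewrite mulVf // scale1r.
rewrite !big_ord_recr big_ord0 /= add0r /sgn /= !scale1r -addrA.
by rewrite !halves.
Qed.

End TypedComponents.

Lemma act_var_fst (j : 'I_4) N (s : 'S_N) (v : var) : (act_var j s v).1 = v.1.
Proof. by rewrite /act_var; case: ifP. Qed.

Lemma act_varC (i j : 'I_4) N M (s : 'S_N) (s' : 'S_M) v : i != j ->
  act_var i s (act_var j s' v) = act_var j s' (act_var i s v).
Proof.
case: v => a b ij; rewrite /act_var /=.
have [->|ai] := eqVneq a i; first by rewrite (negbTE ij) /= eqxx.
by case: (a == j); rewrite /= (negbTE ai).
Qed.

Section Peeling.
Variables (F : fieldType) (A : lmodType F) (mul : A -> A -> A).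
Variables (A0 A1 : A -> Prop) (sharp : A -> A).
Variables (n : 'I_4 -> nat) (rho : forall j : 'I_4, {ffun 'S_(n j) -> F}).

Local Notation admissible := (admissible A0 A1 sharp).
Local Notation act_fold l p := (foldr (fun j q => act_poly j (rho j) q) p l).

Lemma admissible_act j N (s : 'S_N) phi :
  admissible phi -> admissible (phi \o act_var j s).
Proof. by move=> phi_adm v /=; have := phi_adm (act_var j s v); rewrite act_var_fst. Qed.

Lemma admissible_peel (Phi : (var -> A) -> fpoly F -> A) (l : seq 'I_4) p phi :
  {in l, forall j psi q, Phi psi (act_poly j (rho j) q) =
     \sum_(s <- enum {: 'S_(n j)}) rho j s *: Phi (psi \o act_var j s) q} ->
  admissible phi -> Phi phi (act_fold l p) != 0 ->
  exists2 psi, admissible psi & Phi psi p != 0.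
Proof.
elim: l phi => [|j l IHl] phi Phi_act phi_adm /=; first by exists phi.
rewrite Phi_act ?mem_head // => /nonzero_summand [s _].
rewrite scaler_eq0 negb_or => /andP [_ nz].
apply: IHl nz; last exact: admissible_act.
by move=> k k_l; apply: Phi_act; rewrite in_cons k_l orbT.
Qed.

Definition rho_eval_poly (i0 : 'I_4) (psi : var -> A) (p : fpoly F) : A :=
  \sum_(s <- enum {: 'S_(n i0)}) rho i0 s *: eval_poly mul (psi \o act_var i0 s) p.

Lemma rho_eval_poly_act i0 j psi q : j != i0 ->
  rho_eval_poly i0 psi (act_poly j (rho j) q) =
  \sum_(s' <- enum {: 'S_(n j)}) rho j s' *: rho_eval_poly i0 (psi \o act_var j s') q.
Proof.
move=> j_i0; rewrite /rho_eval_poly.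
under eq_bigr do rewrite eval_act_poly scaler_sumr.
rewrite exchange_big; apply: eq_bigr => s' _; rewrite scaler_sumr.
apply: eq_bigr => s _; rewrite !scalerA mulrC; congr (_ *: _).
by apply: eq_eval_poly => v /=; rewrite act_varC // eq_sym.
Qed.

Lemma act_tensor_neq0 i0 phi p :
  admissible phi -> eval_poly mul phi (act_tensor rho p) != 0 ->
  exists2 psi, admissible psi & rho_eval_poly i0 psi p != 0.
Proof.
have i0_enum : i0 \in enum 'I_4 by rewrite mem_enum.
move: (enum_uniq 'I_4); rewrite /act_tensor.
case/splitPr: i0_enum => l1 l2; rewrite cat_uniq /= => /and3P [_ _ /andP [i0_l2 _]].
rewrite foldr_cat /= => phi_adm nz.
have [psi psi_adm] := admissible_peel (fun j _ psi => eval_act_poly mul psi j (rho j)) phi_adm nz.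
rewrite eval_act_poly => /(admissible_peel (Phi := rho_eval_poly i0)); apply=> //.
by move=> j j_l2 psi' q; apply: rho_eval_poly_act; apply: contraNneq i0_l2 => <-.
Qed.

Lemma rho_eval_poly_neq0 i0 psi p : rho_eval_poly i0 psi p != 0 ->
  exists2 c, c \in p &
    \sum_(s <- enum {: 'S_(n i0)}) rho i0 s *: eval_mon mul (psi \o act_var i0 s) c.2 != 0.
Proof.
rewrite /rho_eval_poly /eval_poly; under eq_bigr do rewrite scaler_sumr.
rewrite exchange_big => /nonzero_summand [c c_p nz]; exists c => //.
apply: contraNneq nz => zero; under eq_bigr do rewrite scalerA mulrC -scalerA.
by rewrite -scaler_sumr zero scaler0.
Qed.

End Peeling.

Definition block (A : Type) := (var + ('I_4 * A))%type.

Definition block_val (A : Type) (g : var -> A) (b : block A) : A :=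
  match b with inl v => g v | inr ja => ja.2 end.

Definition is_var_block (A : Type) (b : block A) : bool :=
  if b is inl _ then true else false.

Definition block_vars (A : Type) (L : seq (block A)) : seq var :=
  pmap (fun b => if b is inl v then Some v else None) L.

Definition block_tags (A : Type) (L : seq (block A)) : seq 'I_4 :=
  pmap (fun b => if b is inr ja then Some ja.1 else None) L.

Lemma block_vars_cons (A : Type) (b : block A) L :
  block_vars (b :: L) = block_vars [:: b] ++ block_vars L.
Proof. by case: b. Qed.

Lemma count_orb_sorted (s : seq bool) :
  sorted orb s -> (count negb s <= (count id s).+1)%N.
Proof.
have path_count x s' : path orb x s' -> (count negb s' <= count id s' + x)%N.
  by elim: s' x => //= y s' IHs x /andP [xy /IHs]; case: x y xy => [] [] //=; lia.
by case: s => //= x s /path_count; case: x => /=; lia.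
Qed.

Lemma size_block_tags (A : Type) (L : seq (block A)) :
  sorted orb (map (@is_var_block A) L) ->
  (size (block_tags L) <= (size (block_vars L)).+1)%N.
Proof.
have [-> ->] : size (block_tags L) = count negb (map (@is_var_block A) L) /\
               size (block_vars L) = count id (map (@is_var_block A) L).
  by elim: L => [|[v|ja] L [IHt IHv]] //=; rewrite IHt IHv.
exact: count_orb_sorted.
Qed.

Section Runs.
Variables (F : fieldType) (A : lmodType F) (mul : A -> A -> A).
Hypothesis mulA : associative mul.
Variable moving : pred var.

(* The tag [ord0] is a placeholder, the actual types are chosen by [tag_blocks]. *)
Fixpoint runs (psi : var -> A) (W : seq var) : seq (block A) :=
  if W is v :: W' then
    if moving v then inl v :: runs psi W'
    else if runs psi W' is inr (_, a) :: L then inr (ord0, mul (psi v) a) :: L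
         else inr (ord0, psi v) :: runs psi W'
  else [::].

Lemma runs_eq_nil psi W : (runs psi W == [::]) = (W == [::]).
Proof.
by case: W => //= v W; case: (moving v) => //; case: (runs psi W) => [|[?|[? ?]] ?].
Qed.

Lemma prod_runs g psi W :
  prod_seq mul (map (block_val g) (runs psi W)) =
  prod_seq mul (map (fun v => if moving v then g v else psi v) W).
Proof.
elim: W => [|v W IHW] //=.
have [->|W_nil] := eqVneq W [::]; first by case: (moving v).
have map_nil (T : eqType) (f : T -> A) (s : seq T) : s != [::] -> map f s != [::] by case: s.
rewrite [X in _ = X](prod_seq_cons mulA) ?map_nil // -IHW.
case: (moving v) => /=; first by rewrite (prod_seq_cons mulA) ?map_nil ?runs_eq_nil.
case: (runs psi W) (runs_eq_nil psi W) => [|[u|[t a]] L] /=.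
- by rewrite (negbTE W_nil).
- by move=> _; rewrite (prod_seq_cons mulA).
- by move=> _; rewrite (prod_seq_cons_mul mulA).
Qed.

Lemma block_vars_runs psi W : block_vars (runs psi W) = filter moving W.
Proof.
elim: W => [|v W IHW] //=; case: (moving v) => /=; first by rewrite IHW.
by case: (runs psi W) IHW => [|[u|[t a]] L].
Qed.

Lemma sorted_runs psi W : sorted orb (map (@is_var_block A) (runs psi W)).
Proof.
elim: W => [|v W IHW] //=; case: (moving v) => /=.
  by case: (map _ (runs psi W)) IHW.
by case: (runs psi W) IHW => [|[u|[t a]] L].
Qed.

End Runs.

Lemma allpairs_pair_uniq (S T : eqType) (s : seq S) (t : S -> seq T) :
  uniq s -> (forall x, uniq (t x)) -> uniq [seq (x, y) | x <- s, y <- t x].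
Proof. by move=> uniq_s uniq_t; apply: allpairs_uniq_dep => // [[x y] [x' y']] _ _ [-> ->]. Qed.

Lemma sum_count_mem (T : finType) (s : seq T) : (\sum_(j : T) count_mem j s)%N = size s.
Proof.
elim: s => [|x s IHs] /=; first by rewrite big1.
rewrite big_split /= IHs (bigD1 x) //= eqxx big1 ?addn0 // => j.
by rewrite eq_sym => /negbTE ->.
Qed.

Section QIndices.
Variables (n : 'I_4 -> nat) (i0 : 'I_4) (Q : {set 'I_(n i0)}).

Definition QV : seq nat := [seq val q | q <- enum Q].

Definition in_Q (v : var) : bool := (v.1 == i0) && (v.2 \in QV).

Lemma mem_QV (q : 'I_(n i0)) : (val q \in QV) = (q \in Q).
Proof. by rewrite mem_map ?mem_enum //; exact: val_inj. Qed.

Lemma size_QV : size QV = #|Q|.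
Proof. by rewrite size_map cardE. Qed.

Lemma uniq_QV : uniq QV.
Proof. by rewrite map_inj_uniq ?enum_uniq //; exact: val_inj. Qed.

Definition non_Q (N : nat) : seq nat := [seq x <- iota 0 N | x \notin QV].

Definition fresh_idx (k : nat) : nat := nth 0%N (non_Q (k.+1 + size QV)) k.

Lemma size_non_Q N : (N - size QV <= size (non_Q N))%N.
Proof.
have QV_count : (count (mem QV) (iota 0 N) <= size QV)%N.
  rewrite -size_filter; apply: uniq_leq_size; first by rewrite filter_uniq ?iota_uniq.
  by move=> x; rewrite mem_filter => /andP [].
have := count_predC (mem QV) (iota 0 N); rewrite size_iota /non_Q size_filter.
rewrite -[count (predC _) _]/(count (fun x => x \notin QV) (iota 0 N)); lia.
Qed.

Lemma lt_size_non_Q k N : (k.+1 + size QV <= N)%N -> (k < size (non_Q N))%N.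
Proof. by move=> le_kN; apply: leq_trans (size_non_Q N); rewrite leq_subRL; lia. Qed.

Lemma non_Q_prefix N M : (N <= M)%N -> exists s, non_Q M = non_Q N ++ s.
Proof.
move=> le_NM; exists [seq x <- iota N (M - N) | x \notin QV].
by rewrite -filter_cat -iotaD subnKC.
Qed.

Lemma fresh_idxE k N : (k.+1 + size QV <= N)%N -> fresh_idx k = nth 0%N (non_Q N) k.
Proof.
move=> le_kN; have [s ->] := non_Q_prefix le_kN.
by rewrite nth_cat /fresh_idx lt_size_non_Q.
Qed.

Lemma fresh_idx_mem k : fresh_idx k \in non_Q (k.+1 + size QV).
Proof. exact/mem_nth/lt_size_non_Q. Qed.

Lemma fresh_idx_notQ k : fresh_idx k \notin QV.
Proof. by have := fresh_idx_mem k; rewrite mem_filter => /andP []. Qed.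

Lemma fresh_idx_lt k : (fresh_idx k < k.+1 + size QV)%N.
Proof. by have := fresh_idx_mem k; rewrite mem_filter mem_iota => /and3P []. Qed.

Lemma fresh_idx_inj : injective fresh_idx.
Proof.
move=> k k'; set N := (k.+1 + k'.+1 + size QV)%N.
rewrite (@fresh_idxE k N) ?(@fresh_idxE k' N) /N; try lia.
by move/eqP; rewrite nth_uniq ?filter_uniq ?iota_uniq ?lt_size_non_Q //; [move/eqP | lia..].
Qed.

Definition fresh_var (j : 'I_4) (k : nat) : var :=
  if j == i0 then (i0, fresh_idx k) else (j, k).

Lemma fresh_var_fst j k : (fresh_var j k).1 = j.
Proof. by rewrite /fresh_var; case: eqP. Qed.

Lemma fresh_var_notQ j k : ~~ in_Q (fresh_var j k).
Proof.
rewrite /fresh_var /in_Q; case: (eqVneq j i0) => [_|j_i0] /=; last by rewrite (negbTE j_i0).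
by rewrite eqxx fresh_idx_notQ.
Qed.

Lemma fresh_var_inj j k j' k' : fresh_var j k = fresh_var j' k' -> j = j' /\ k = k'.
Proof.
rewrite /fresh_var; case: (eqVneq j i0) => [-> | j_i0]; case: (eqVneq j' i0) => [-> | j'_i0] //.
- by case=> /fresh_idx_inj.
- by case=> j'E; rewrite j'E eqxx in j'_i0.
- by case=> jE; rewrite jE eqxx in j_i0.
- by case.
Qed.

Definition fresh_X (e : nat) : seq nat := QV ++ map fresh_idx (iota 0 e).

Lemma uniq_fresh_X e : uniq (fresh_X e).
Proof.
rewrite cat_uniq uniq_QV (map_inj_uniq fresh_idx_inj) iota_uniq andbT /=.
by apply/hasPn => _ /mapP [k _ ->]; apply: fresh_idx_notQ.
Qed.

Lemma size_fresh_X e : size (fresh_X e) = (#|Q| + e)%N.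
Proof. by rewrite size_cat size_map size_iota size_QV. Qed.

Lemma Q_sub_fresh_X e (q : 'I_(n i0)) : q \in Q -> val q \in fresh_X e.
Proof. by rewrite mem_cat mem_QV => ->. Qed.

Lemma fresh_X_bound e x : x \in fresh_X e ->
  (forall q : 'I_(n i0), q \in Q -> val q != x) -> (x < #|Q| + e)%N.
Proof.
rewrite mem_cat => /orP [/mapP [q]|/mapP [k]].
  by rewrite mem_enum => q_Q -> /(_ q q_Q); rewrite eqxx.
rewrite mem_iota => /andP [_ lt_ke] -> _; have := fresh_idx_lt k; rewrite size_QV; lia.
Qed.

Lemma perm_filter_inQ W : uniq W -> (forall q : 'I_(n i0), q \in Q -> (i0, val q) \in W) ->
  perm_eq (filter in_Q W) (map (pair i0) QV).
Proof.
move=> uniq_W Q_W; apply: uniq_perm.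
- exact: filter_uniq.
- by rewrite map_inj_uniq ?uniq_QV // => x y [].
move=> [a b]; rewrite mem_filter /in_Q /=; apply/andP/mapP.
  by case=> /andP [/eqP -> b_QV] _; exists b.
case=> x x_QV [-> ->]; rewrite eqxx x_QV; split=> //.
by case/mapP: x_QV => q; rewrite mem_enum => q_Q ->; apply: Q_W.
Qed.

Lemma sum_degrees c (s : seq 'I_4) :
  (\sum_(j < 4) ((if j == i0 then c else 0) + count_mem j s) = c + size s)%N.
Proof.
rewrite big_split /= sum_count_mem (bigD1 i0) //= eqxx big1 ?addn0 //.
by move=> j /negbTE ->.
Qed.

Section Realization.
Variable A : Type.

Definition incr (cnt : 'I_4 -> nat) (j : 'I_4) : 'I_4 -> nat :=
  fun j' => (cnt j' + (j' == j))%N.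

(* [cnt j] is the number of fresh variables of type [j] used so far. *)
Fixpoint realize (cnt : 'I_4 -> nat) (T : seq (block A)) : seq var :=
  if T is b :: T' then
    match b with
    | inl v => v :: realize cnt T'
    | inr (j, _) => fresh_var j (cnt j) :: realize (incr cnt j) T'
    end
  else [::].

Fixpoint realize_subst (psi : var -> A) (cnt : 'I_4 -> nat) (T : seq (block A)) :
    var -> A :=
  if T is b :: T' then
    match b with
    | inl _ => realize_subst psi cnt T'
    | inr (j, a) => fun v =>
        if v == fresh_var j (cnt j) then a else realize_subst psi (incr cnt j) T' v
    end
  else psi.

Lemma mem_realize cnt T u : u \in realize cnt T <->
  u \in block_vars T \/ exists j k, [/\ u = fresh_var j k, (cnt j <= k)%N &
                                       (k < cnt j + count_mem j (block_tags T))%N].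
Proof.
elim: T cnt => [|[v|[j a]] T IHT] cnt /=.
- by split=> [//|[//|[j [k [_ le_k]]]]]; rewrite addn0 ltnNge le_k.
- rewrite !in_cons; split.
  + by case/orP=> [->|/IHT [->|?]]; [left | rewrite orbT; left | right].
  + by case=> [/orP [->//|?]|?]; apply/orP; right; apply/IHT; [left | right].
- rewrite in_cons; split.
  + case/orP=> [/eqP ->|/IHT [?|[j' [k [-> le_k lt_k]]]]]; [right | by left | right].
      by exists j, (cnt j); rewrite eqxx; split=> //; lia.
    exists j', k; move: le_k lt_k; rewrite /incr eq_sym.
    by case: eqP => _ /=; split=> //; lia.
  + case=> [?|[j' [k [u_fresh le_k lt_k]]]]; apply/orP; first by right; apply/IHT; left.
    have [j'E|j_j'] := eqVneq j' j; last first.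
      right; apply/IHT; right; exists j', k; rewrite /incr (negbTE j_j') addn0.
      by move: lt_k; rewrite eq_sym (negbTE j_j').
    subst j'; have [k_cnt|k_cnt] := eqVneq k (cnt j); first by left; rewrite u_fresh k_cnt.
    right; apply/IHT; right; exists j, k; rewrite /incr eqxx; move: lt_k; rewrite eqxx /=.
    by split=> //; lia.
Qed.

Lemma mem_realize_fresh cnt T u : u \in realize cnt T ->
  u \in block_vars T \/ exists j k, u = fresh_var j k /\ (cnt j <= k)%N.
Proof. by case/mem_realize=> [|[j [k [-> le_k _]]]]; [left | right; exists j, k]. Qed.

Lemma realize_uniq cnt T : uniq (block_vars T) -> all in_Q (block_vars T) ->
  uniq (realize cnt T).
Proof.
elim: T cnt => [|[v|[j a]] T IHT] cnt //=.
  case/andP=> v_T uniq_T /andP [v_Q all_Q]; rewrite IHT // andbT.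
  apply/negP=> /mem_realize_fresh [/(negP v_T) //|[j [k [v_fresh _]]]].
  by move: v_Q; rewrite v_fresh (negbTE (fresh_var_notQ j k)).
move=> uniq_T all_Q; rewrite IHT // andbT.
apply/negP=> /mem_realize_fresh [fresh_T|[j' [k [/fresh_var_inj [<- <-]]]]].
  by move: (allP all_Q _ fresh_T); rewrite (negbTE (fresh_var_notQ j (cnt j))).
by rewrite /incr eqxx addn1 ltnn.
Qed.

Lemma realize_subst_inQ psi cnt T v : in_Q v -> realize_subst psi cnt T v = psi v.
Proof.
elim: T cnt => [|[w|[j a]] T IHT] cnt v_Q //=; first exact: IHT.
case: eqP => [v_fresh|_]; last exact: IHT.
by move: v_Q; rewrite v_fresh (negbTE (fresh_var_notQ _ _)).
Qed.

Lemma all_inQ (T : seq (block A)) :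
  perm_eq (block_vars T) (map (pair i0) QV) -> all in_Q (block_vars T).
Proof.
move=> T_vars; apply/allP => u; rewrite (perm_mem T_vars) => /mapP [x x_QV ->].
by rewrite /in_Q eqxx.
Qed.

Lemma realize_perm T (t : 'I_4 -> nat) :
  perm_eq (block_vars T) (map (pair i0) QV) ->
  (forall j, j != i0 -> t j = count_mem j (block_tags T)) ->
  perm_eq (realize (fun=> 0%N) T)
    ([seq (j, k) | j <- [seq j <- enum 'I_4 | j != i0], k <- iota 0 (t j)] ++
     [seq (i0, x) | x <- fresh_X (count_mem i0 (block_tags T))]).
Proof.
move=> T_vars t_T; set e := count_mem i0 (block_tags T).
apply: uniq_perm.
- apply: realize_uniq (all_inQ T_vars); rewrite (perm_uniq T_vars) map_inj_uniq ?uniq_QV //.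
  by move=> x y [].
- have uniq_left : uniq [seq (j, k) | j <- [seq j <- enum 'I_4 | j != i0], k <- iota 0 (t j)].
    by apply: allpairs_pair_uniq => [|j]; [apply/filter_uniq/enum_uniq | apply: iota_uniq].
  rewrite cat_uniq uniq_left map_inj_uniq ?uniq_fresh_X ?andbT /=; last by move=> x y [].
  apply/hasPn => _ /mapP [x _ ->]; apply/allpairsPdep => -[j [k [j_i0 _ [jE _]]]].
  by move: j_i0; rewrite mem_filter -jE eqxx.
move=> u; rewrite mem_cat; apply/idP/idP.
- case/mem_realize=> [|[j [k [-> _ lt_k]]]].
    rewrite (perm_mem T_vars) => /mapP [x x_QV ->]; apply/orP; right.
    by apply: map_f; rewrite mem_cat x_QV.
  rewrite /fresh_var; case: (eqVneq j i0) => [jE|j_i0]; apply/orP; [right | left].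
    by apply: map_f; rewrite mem_cat; apply/orP; right; apply: map_f; rewrite mem_iota /e -jE.
  apply/allpairsPdep; exists j, k; rewrite mem_filter j_i0 mem_enum mem_iota t_T //.
- case/orP=> [/allpairsPdep [j [k [j_i0 k_t ->]]]|/mapP [x]].
    move: j_i0 k_t; rewrite mem_filter mem_enum andbT mem_iota => j_i0.
    rewrite t_T // => lt_k; apply/mem_realize; right; exists j, k.
    by rewrite /fresh_var (negbTE j_i0).
  rewrite mem_cat => /orP [x_QV ->|/mapP [k k_e ->] ->]; apply/mem_realize.
    by left; rewrite (perm_mem T_vars); apply: map_f.
  by right; exists i0, k; rewrite /fresh_var eqxx; move: k_e; rewrite mem_iota.
Qed.

End Realization.

Section Witness.
Variables (F : fieldType) (A : lmodType F) (mul : A -> A -> A).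
Variables (A0 A1 : A -> Prop) (sharp : A -> A) (kind : bool).
Hypothesis char0 : [pchar F] =i pred0.
Hypothesis A_sharp : sharp_superalgebra mul A0 A1 sharp kind.
Variable r : {ffun 'S_(n i0) -> F}.
Hypothesis r_in_FS_Q : in_FS_Q Q r.

Let mulA : associative mul.
Proof. by case: A_sharp. Qed.

Let mulDl : left_distributive mul +%R.
Proof. by case: A_sharp => _ mulDl _ _ _ a b c; have := mulDl 1 a b c; rewrite !scale1r. Qed.

Let mulDr : right_distributive mul +%R.
Proof. by case: A_sharp => _ _ mulDr _ _ a b c; have := mulDr 1 a b c; rewrite !scale1r. Qed.

Let A_type_decomposition a :
  exists c : 'I_4 -> A, (forall j, of_type A0 A1 sharp j (c j)) /\ a = \sum_(j < 4) c j.
Proof.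
case: A_sharp => _ _ _ [A0_sub A1_sub graded _ _] [sharp_lin sharp_hom sharpK _].
by apply: type_decomposition => //; rewrite (pcharf0P F).1.
Qed.

Local Notation admissible := (admissible A0 A1 sharp).
Local Notation of_type := (of_type A0 A1 sharp).
Local Notation prod_seq := (prod_seq mul).

Lemma act_var_notQ s v : r s != 0 -> ~~ in_Q v -> act_var i0 s v = v.
Proof.
move=> rs; case: v => a b; rewrite /act_var /in_Q /=.
have [-> /= b_QV|//] := eqVneq a i0; rewrite /act_idx; case: insubP => // k _ kb.
by rewrite (r_in_FS_Q rs) ?kb // -mem_QV kb.
Qed.

Lemma act_var_inQ s v : r s != 0 -> in_Q v -> in_Q (act_var i0 s v).
Proof.
move=> rs; case: v => a b; rewrite /act_var /in_Q /= => /andP [/eqP -> /mapP [q]].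
rewrite mem_enum => q_Q ->; rewrite eqxx /= eqxx /act_idx valK /= mem_QV.
apply: contraT => sq_Q; have := r_in_FS_Q rs sq_Q; move/perm_inj => sqq.
by move: sq_Q; rewrite sqq q_Q.
Qed.

Definition rho_eval (psi : var -> A) (L : seq (block A)) : A :=
  \sum_(s <- enum {: 'S_(n i0)}) r s *: prod_seq (map (block_val (psi \o act_var i0 s)) L).

Lemma rho_eval_runs psi W :
  rho_eval psi (runs mul in_Q psi W) =
  \sum_(s <- enum {: 'S_(n i0)}) r s *: eval_mon mul (psi \o act_var i0 s) W.
Proof.
apply: eq_bigr => s _; have [->|rs] := eqVneq (r s) 0; first by rewrite !scale0r.
rewrite prod_runs // eval_monE; congr (_ *: prod_seq _); apply: eq_map => v /=.
by case: ifP => // /negbT /(act_var_notQ rs) ->.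
Qed.

Lemma rho_eval_mid_sum psi P R j (c : 'I_4 -> A) :
  rho_eval psi (P ++ inr (j, \sum_(t < 4) c t) :: R) =
  \sum_(t < 4) rho_eval psi (P ++ inr (t, c t) :: R).
Proof.
rewrite /rho_eval exchange_big; apply: eq_bigr => s _.
rewrite map_cat /= prod_seq_mid_sum // scaler_sumr.
by apply: eq_bigr => t _; rewrite map_cat.
Qed.

Definition typed_blocks (T : seq (block A)) :=
  forall j a, inr (j, a) \in T -> of_type j a.

Lemma tag_block psi P b R : rho_eval psi (P ++ b :: R) != 0 ->
  exists b', [/\ is_var_block b' = is_var_block b, block_vars [:: b'] = block_vars [:: b],
                 typed_blocks [:: b'] & rho_eval psi (P ++ b' :: R) != 0].
Proof.
case: b => [v|[j a]]; first by exists (inl v); split=> // ? ?; rewrite inE.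
have [c [c_typed ->]] := A_type_decomposition a.
rewrite rho_eval_mid_sum => /nonzero_summand [t _ nz].
by exists (inr (t, c t)); split=> // ? ?; rewrite inE => /eqP [-> ->].
Qed.

Lemma tag_blocks psi P R : rho_eval psi (P ++ R) != 0 ->
  exists T, [/\ map (@is_var_block A) T = map (@is_var_block A) R,
                block_vars T = block_vars R, typed_blocks T & rho_eval psi (P ++ T) != 0].
Proof.
elim: R P => [|b R IHR] P nz; first by exists [::]; split=> // ? ?; rewrite inE.
have [b' [var_b' vars_b' typed_b']] := tag_block nz; rewrite -cat_rcons => /IHR.
case=> T [is_var_T vars_T typed_T nz_T]; exists (b' :: T); split.
- by rewrite /= var_b' is_var_T.
- by rewrite block_vars_cons vars_b' vars_T -block_vars_cons.
- by move=> j a; rewrite inE => /orP [ja_b'|/typed_T //]; apply: typed_b'; rewrite inE.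
- by rewrite -cat_rcons.
Qed.

Lemma realize_subst_admissible psi cnt T : admissible psi -> typed_blocks T ->
  admissible (realize_subst psi cnt T).
Proof.
move=> psi_adm; elim: T cnt => [|[w|[j a]] T IHT] cnt T_typed v /=.
- exact: psi_adm.
- by apply: IHT => j a ja_T; apply: T_typed; rewrite in_cons ja_T orbT.
- case: eqP => [->|_]; first by rewrite fresh_var_fst; apply: T_typed; rewrite mem_head.
  by apply: IHT => j' a' ja_T; apply: T_typed; rewrite in_cons ja_T orbT.
Qed.

Lemma realize_subst_eval psi s cnt (T : seq (block A)) : r s != 0 -> all in_Q (block_vars T) ->
  map (realize_subst psi cnt T \o act_var i0 s) (realize cnt T) =
  map (block_val (psi \o act_var i0 s)) T.
Proof.
move=> rs; elim: T cnt => [|[v|[j a]] T IHT] cnt //=.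
  by case/andP=> v_Q T_Q; rewrite realize_subst_inQ ?act_var_inQ ?IHT.
move=> T_Q; rewrite act_var_notQ ?fresh_var_notQ // eqxx -(IHT (incr cnt j)) //.
congr (_ :: _); apply/eq_in_map => u /mem_realize_fresh u_T /=.
case: eqP => // act_u; exfalso; case: u_T => [u_T|[j' [k [u_fresh le_k]]]].
  by move: (fresh_var_notQ j (cnt j)); rewrite -act_u act_var_inQ // (allP T_Q).
move: act_u le_k; rewrite u_fresh act_var_notQ ?fresh_var_notQ // => /fresh_var_inj [-> ->].
by rewrite /incr eqxx addn1 ltnn.
Qed.

Lemma realize_not_id_zero psi (T : seq (block A)) :
  admissible psi -> typed_blocks T -> perm_eq (block_vars T) (map (pair i0) QV) ->
  rho_eval psi T != 0 ->
  ~ id_zero mul A0 A1 sharp (act_poly i0 r [:: (1, realize (fun=> 0%N) T)]).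
Proof.
move=> psi_adm T_typed /all_inQ T_Q nz zero; move: nz.
suff -> : rho_eval psi T = eval_poly mul (realize_subst psi (fun=> 0%N) T)
                              (act_poly i0 r [:: (1, realize (fun=> 0%N) T)]).
  by rewrite zero ?eqxx //; apply: realize_subst_admissible.
rewrite eval_act_poly; apply: eq_bigr => s _.
have [->|rs] := eqVneq (r s) 0; first by rewrite !scale0r.
by rewrite /eval_poly big_seq1 scale1r eval_monE realize_subst_eval.
Qed.

Lemma tag_monomial psi W : admissible psi -> uniq W ->
  (forall q : 'I_(n i0), q \in Q -> (i0, val q) \in W) ->
  \sum_(s <- enum {: 'S_(n i0)}) r s *: eval_mon mul (psi \o act_var i0 s) W != 0 ->
  exists T, [/\ perm_eq (block_vars T) (map (pair i0) QV),
                (size (block_tags T) <= #|Q|.+1)%N, typed_blocks T & rho_eval psi T != 0].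
Proof.
move=> psi_adm uniq_W Q_W; rewrite -rho_eval_runs -[runs _ _ _ _]cat0s.
case/tag_blocks=> T [shape_T vars_T T_typed nz].
have T_vars : perm_eq (block_vars T) (map (pair i0) QV).
  by rewrite vars_T block_vars_runs perm_filter_inQ.
exists T; split=> //; rewrite -size_QV.
have := size_block_tags (_ : sorted orb (map (@is_var_block A) T)).
by rewrite (perm_size T_vars) size_map shape_T; apply; apply: sorted_runs.
Qed.

End Witness.

End QIndices.

Lemma uniq_ml_vars (n : 'I_4 -> nat) : uniq (ml_vars n).
Proof. by apply: allpairs_pair_uniq => [|j]; [apply: enum_uniq | apply: iota_uniq]. Qed.

Lemma mem_ml_vars (n : 'I_4 -> nat) j k : ((j, k) \in ml_vars n) = (k < n j)%N.
Proof.
apply/allpairsPdep/idP => [[j' [k' [_ k'_n [-> ->]]]]|k_n]; first by rewrite mem_iota in k'_n.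
by exists j, k; rewrite mem_enum mem_iota.
Qed.

Theorem proposition4p1 (F : fieldType) (A : lmodType F) (mul : A -> A -> A)
    (A0 A1 : A -> Prop) (sharp : A -> A) (kind : bool)
    (n : 'I_4 -> nat) (m : nat) (i0 : 'I_4) (Q : {set 'I_(n i0)})
    (rho : forall j : 'I_4, {ffun 'S_(n j) -> F}) (f : fpoly F) :
  [pchar F] =i pred0 ->
  sharp_superalgebra mul A0 A1 sharp kind ->
  (forall j, (0 < n j)%N) -> (0 < m)%N ->
  (m ^ 2 <= n i0)%N -> #|Q| = (m ^ 2)%N ->
  in_FS_Q Q (rho i0) ->
  in_P n f ->
  ~ id_zero mul A0 A1 sharp (act_tensor rho f) ->
  exists t : 'I_4 -> nat,
    [/\ (m ^ 2 <= t i0)%N,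
        (m ^ 2 <= \sum_(j < 4) t j)%N,
        (\sum_(j < 4) t j <= 2 * m ^ 2 + 1)%N &
    exists X : seq nat,
      [/\ uniq X, size X = t i0,
          (forall q : 'I_(n i0), q \in Q -> val q \in X),
          (forall x, x \in X -> (forall q : 'I_(n i0), q \in Q -> val q != x) ->
             (x < t i0)%N) &
      exists w : monom,
        perm_eq w ([seq (j, k) | j <- [seq j <- enum 'I_4 | j != i0],
                                 k <- iota 0 (t j)]
                   ++ [seq (i0, x) | x <- X]) /\
        ~ id_zero mul A0 A1 sharp (act_poly i0 (rho i0) [:: (1, w)])]].
Proof.
move=> char0 A_sharp _ _ _ card_Q rho_FS f_P nz.
have [phi phi_adm phi_nz] :
    exists2 phi, admissible A0 A1 sharp phi & eval_poly mul phi (act_tensor rho f) != 0.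
  have [phi /(imply_to_and (admissible A0 A1 sharp phi)) [phi_adm /eqP]] :=
    not_all_ex_not _ _ nz.
  by exists phi.
have [psi psi_adm /rho_eval_poly_neq0 [c c_f c_nz]] := act_tensor_neq0 i0 phi_adm phi_nz.
have c_ml : perm_eq c.2 (ml_vars n) := allP f_P c c_f.
have c_uniq : uniq c.2 by rewrite (perm_uniq c_ml) uniq_ml_vars.
have Q_c q : q \in Q -> (i0, val q) \in c.2 by rewrite (perm_mem c_ml) mem_ml_vars ltn_ord.
have [T [T_vars T_tags T_typed T_nz]] :=
  tag_monomial char0 A_sharp rho_FS psi_adm c_uniq Q_c c_nz.
exists (fun j => (if j == i0 then m ^ 2 else 0) + count_mem j (block_tags T))%N.
rewrite sum_degrees /= eqxx -card_Q; split; [exact: leq_addr | exact: leq_addr | lia |].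
exists (fresh_X Q (count_mem i0 (block_tags T))); split.
- exact: uniq_fresh_X.
- exact: size_fresh_X.
- exact: Q_sub_fresh_X.
- exact: fresh_X_bound.
exists (realize Q (fun=> 0%N) T); split; first by apply: realize_perm => // j /negbTE ->.
exact (realize_not_id_zero rho_FS psi_adm T_typed T_vars T_nz).
Qed.
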